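(* Let $Q:(-\infty,-1)\to(-\infty,0)$ be the inverse of the strictly increasing function $G\mapsto G-e^G$ on $(-\infty,0)$, and define $R:\mathbb{R}\to\mathbb{R}$ by $R(V)=-2(1-e^{Q(V)})^2$ for $V<-1$ and $R(V)=4(V+1)$ for $V\ge -1$. Fix $m<-1$. For $n\in\mathbb{R}$ let $V(t;n)$ denote the unique solution of $V''+3V'=R(V)$, $t>0$, $V(0)=m$, $V'(0)=n$ (prime denoting $d/dt$, $V_t=dV/dt$). Define $\beta^0=\{n\in\mathbb{R}: V_t(t;n)>0 \text{ and } V(t;n)\le -1 \text{ for all } t>0\}$. Then $\beta^0$ is a nonempty closed set. Moreover, if $n\in\beta^0$, then $V(t;n)<-1$ for all $t>0$. *)

From Stdlib Require Import Reals ClassicalEpsilon.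
From Coquelicot Require Import Coquelicot.
Open Scope R_scope.

(* Q : (-oo,-1) -> (-oo,0), inverse of G |-> G - exp G on (-oo,0).
   Defined by choice; for v < -1 the defining property has a unique witness. *)
Definition Q (v : R) : R :=
  epsilon (inhabits 0) (fun G => G < 0 /\ G - exp G = v).

Definition Rf (v : R) : R :=
  if Rlt_dec v (-1) then -2 * (1 - exp (Q v)) ^ 2 else 4 * (v + 1).

(* f solves V'' + 3 V' = R(V) for t > 0 with V(0) = m, V'(0) = n.
   (f is required differentiable on all of R; since R is globally Lipschitz
   the solution on [0,oo) extends uniquely to R, so this is harmless.) *)
Definition is_solution (m n : R) (f : R -> R) : Prop :=
  (forall t, ex_derive f t) /\
  (forall t, 0 < t -> is_derive (Derive f) t (Rf (f t) - 3 * Derive f t)) /\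
  f 0 = m /\ Derive f 0 = n.

Definition beta0 (V : R -> R -> R) : R -> Prop :=
  fun n => forall t, 0 < t -> Derive (V n) t > 0 /\ V n t <= -1.

From Stdlib Require Import Reals Lra Psatz ClassicalEpsilon.
From Coquelicot Require Import Coquelicot.
Open Scope R_scope.

(* Shooting in the initial speed n.  Say that n escapes above if V(t; n) > -1 and V' > 0
   at some t > 0, and that n turns back if V < -1 and V' < 0 at some t > 0.  Since
   (V' e^{3t})' = R(V) e^{3t} and R(V) has the sign of V + 1, both properties persist for
   all later times, so no n has both.  R is 4-Lipschitz, hence by Gronwall applied to
   (V1 - V2)^2 + (V1' - V2')^2 the solution depends continuously on n, and both sets are
   open.  n = -1 turns back and n = (3 - m) e^3 escapes above, so by connectedness some n
   in between does neither, and such an n satisfies V' >= 0 and V <= -1.  These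
   non-strict conditions are closed in n, and they already force V' > 0 and V < -1:
   V = -1 with V' = 0 would make V coincide with the constant solution -1, while V' = 0
   with V < -1 gives V'' = R(V) < 0. *)

Lemma exp_le_mono (x y : R) : x <= y -> exp x <= exp y.
Proof. intros [hlt| ->]; [left; apply exp_increasing, hlt|right; reflexivity]. Qed.

Lemma Rabs_le_of_sq_le (x y : R) : 0 <= y -> x ^ 2 <= y ^ 2 -> Rabs x <= y.
Proof.
  intros hy hsq. rewrite <- (pow2_abs x) in hsq. pose proof (Rabs_pos x).
  apply Rnot_lt_le. intro hlt. nra.
Qed.

Lemma mult_lt_of_lt_div (K z eps : R) : 0 <= K -> 0 < eps -> 0 <= z -> z < eps / (K + 1) ->
  K * z < eps.
Proof.
  intros hK heps hz hlt. apply (Rmult_lt_compat_l (K + 1)) in hlt; [|lra].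
  replace ((K + 1) * (eps / (K + 1))) with eps in hlt by (field; lra). nra.
Qed.

Lemma is_derive_MVT (f f' : R -> R) (a b : R) : a < b ->
  (forall c, a <= c <= b -> is_derive f c (f' c)) ->
  exists c, a < c < b /\ f b - f a = f' c * (b - a).
Proof.
  intros hab hd. destruct (MVT_cor2 f f' a b hab) as [c [e hc]].
  - intros c hc. apply is_derive_Reals. auto.
  - exists c; auto.
Qed.

Lemma le_of_is_derive_nonneg (f f' : R -> R) (a b : R) : a <= b ->
  (forall c, a <= c <= b -> is_derive f c (f' c)) ->
  (forall c, a < c < b -> 0 <= f' c) -> f a <= f b.
Proof.
  intros hab hd hp. destruct (Req_dec a b) as [<-|hne]; [lra|].
  destruct (is_derive_MVT f f' a b) as [c [hc e]]; [lra|auto|].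
  specialize (hp c hc). nra.
Qed.

Lemma lipschitz_of_is_derive_bound (f f' : R -> R) (a b K : R) : a <= b ->
  (forall c, a <= c <= b -> is_derive f c (f' c)) ->
  (forall c, a < c < b -> Rabs (f' c) <= K) -> Rabs (f b - f a) <= K * (b - a).
Proof.
  intros hab hd hK. destruct (Req_dec a b) as [<-|hne].
  { rewrite !Rminus_diag, Rabs_R0. lra. }
  destruct (is_derive_MVT f f' a b) as [c [hc ->]]; [lra|auto|].
  rewrite Rabs_mult, (Rabs_pos_eq (b - a)) by lra.
  apply Rmult_le_compat_r; [lra|auto].
Qed.

Lemma is_derive_pos_locally (g : R -> R) (x l : R) : is_derive g x l -> 0 < l ->
  exists d, 0 < d /\ forall h, 0 < h < d -> g x < g (x + h) /\ g (x - h) < g x.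
Proof.
  intros hd hl. apply is_derive_Reals in hd.
  destruct (hd l hl) as [d hd']. exists d. split; [apply cond_pos|].
  intros h hh.
  assert (quot_pos : forall k, k <> 0 -> Rabs k < d -> 0 < (g (x + k) - g x) / k).
  { intros k hk hkd. specialize (hd' k hk hkd). apply Rabs_lt_between in hd'. lra. }
  split.
  - pose proof (quot_pos h ltac:(lra) ltac:(rewrite Rabs_pos_eq; lra)) as hq.
    assert (hprod : 0 < (g (x + h) - g x) / h * h) by (apply Rmult_lt_0_compat; lra).
    replace ((g (x + h) - g x) / h * h) with (g (x + h) - g x) in hprod by (field; lra).
    lra.
  - pose proof (quot_pos (- h) ltac:(lra) ltac:(rewrite Rabs_Ropp, Rabs_pos_eq; lra)) as hq.
    replace (x + - h) with (x - h) in hq by ring.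
    assert (hprod : 0 < (g (x - h) - g x) / - h * h) by (apply Rmult_lt_0_compat; lra).
    replace ((g (x - h) - g x) / - h * h) with (g x - g (x - h)) in hprod by (field; lra).
    lra.
Qed.

Lemma is_derive_mult_exp (g : R -> R) (dg k x : R) : is_derive g x dg ->
  is_derive (fun u => g u * exp (k * u)) x ((dg + k * g x) * exp (k * x)).
Proof.
  intro hg. auto_derive; [exists dg; exact hg|].
  change (fun y => g y) with g. rewrite (is_derive_unique g x dg hg). ring.
Qed.

Lemma exp_weighted_le (g g' : R -> R) (k a b : R) : a <= b ->
  (forall c, a <= c <= b -> is_derive g c (g' c)) ->
  (forall c, a < c < b -> 0 <= g' c + k * g c) ->
  g a <= g b * exp (k * (b - a)).
Proof.
  intros hab hd hk.
  assert (hmono : g a * exp (k * a) <= g b * exp (k * b)).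
  { apply (le_of_is_derive_nonneg (fun u => g u * exp (k * u))
                                  (fun c => (g' c + k * g c) * exp (k * c))); [lra| |].
    - intros c hc. apply is_derive_mult_exp, hd, hc.
    - intros c hc. pose proof (exp_pos (k * c)). specialize (hk c hc). nra. }
  assert (hsplit : exp (k * b) = exp (k * a) * exp (k * (b - a)))
    by (rewrite <- exp_plus; f_equal; ring).
  rewrite hsplit in hmono. pose proof (exp_pos (k * a)). nra.
Qed.

Lemma gronwall_two_sided (g g' : R -> R) (k a b : R) : a <= b ->
  (forall c, a <= c <= b -> is_derive g c (g' c)) ->
  (forall c, a < c < b -> Rabs (g' c) <= k * g c) ->
  g b <= g a * exp (k * (b - a)) /\ g a <= g b * exp (k * (b - a)).
Proof.
  intros hab hd hk. split.
  - assert (hback : - g a <= - g b * exp (- k * (b - a))).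
    { apply (exp_weighted_le (fun u => - g u) (fun u => - g' u)); auto.
      - intros c hc. apply (is_derive_opp g), hd, hc.
      - intros c hc. specialize (hk c hc). apply Rabs_le_between in hk. lra. }
    assert (hinv : exp (- k * (b - a)) * exp (k * (b - a)) = 1)
      by (rewrite <- exp_plus, <- exp_0; f_equal; ring).
    pose proof (exp_pos (k * (b - a))) as hpos.
    apply (Rmult_le_compat_r (exp (k * (b - a)))) in hback; [|lra].
    rewrite Rmult_assoc, hinv in hback. lra.
  - apply (exp_weighted_le g g'); auto.
    intros c hc. specialize (hk c hc). apply Rabs_le_between in hk. lra.
Qed.

(* By the mean value theorem the difference quotients of [f] at [a] are values of
   [Derive f] to the right of [a]. *)
Lemma Derive_near_of_lipschitz (f : R -> R) (a b L : R) :
  (forall t, a <= t <= b -> ex_derive f t) ->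
  (forall s t, a < s -> s <= t <= b -> Rabs (Derive f t - Derive f s) <= L * (t - s)) ->
  forall u, a < u <= b -> Rabs (Derive f u - Derive f a) <= L * (u - a).
Proof.
  intros hex hlip u hu. apply Rle_plus_epsilon. intros eps heps.
  assert (hda : derivable_pt_lim f a (Derive f a))
    by (apply is_derive_Reals, Derive_correct, hex; lra).
  destruct (hda eps heps) as [delta hdelta]. pose proof (cond_pos delta).
  set (h := Rmin delta (u - a) / 2).
  assert (hh : 0 < h < u - a /\ h < delta).
  { unfold h. pose proof (Rmin_l delta (u - a)). pose proof (Rmin_r delta (u - a)).
    pose proof (Rmin_pos delta (u - a) ltac:(lra) ltac:(lra)). lra. }
  specialize (hdelta h ltac:(lra) ltac:(rewrite Rabs_pos_eq; lra)).
  destruct (is_derive_MVT f (Derive f) a (a + h)) as [c [hc hquot]]; [lra| |].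
  { intros c hc. apply Derive_correct, hex. lra. }
  replace ((f (a + h) - f a) / h) with (Derive f c) in hdelta
    by (rewrite hquot; field; lra).
  specialize (hlip c u ltac:(lra) ltac:(lra)).
  apply Rabs_lt_between in hdelta. apply Rabs_le_between in hlip.
  apply Rabs_le_between. nra.
Qed.

Lemma Derive_at_right_of_lipschitz (f : R -> R) (a b L : R) : a < b ->
  (forall t, a <= t <= b -> ex_derive f t) ->
  (forall s t, a < s -> s <= t <= b -> Rabs (Derive f t - Derive f s) <= L * (t - s)) ->
  filterlim (Derive f) (at_right a) (locally (Derive f a)).
Proof.
  intros hab hex hlip. pose proof (Derive_near_of_lipschitz f a b L hex hlip) as hnear.
  assert (hL : 0 <= L).
  { specialize (hnear b ltac:(lra)). pose proof (Rabs_pos (Derive f b - Derive f a)). nra. }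
  apply filterlim_locally. intros [eps heps].
  assert (hd : 0 < Rmin (b - a) (eps / (L + 1)))
    by (apply Rmin_pos; [lra|apply Rdiv_lt_0_compat; lra]).
  exists (mkposreal _ hd). intros u hu hau. simpl in hu, hau.
  change (Rabs (u - a) < Rmin (b - a) (eps / (L + 1))) in hu.
  change (Rabs (Derive f u - Derive f a) < eps).
  apply Rabs_lt_between in hu.
  pose proof (Rmin_l (b - a) (eps / (L + 1))). pose proof (Rmin_r (b - a) (eps / (L + 1))).
  pose proof (hnear u ltac:(lra)).
  pose proof (mult_lt_of_lt_div L (u - a) eps hL heps ltac:(lra) ltac:(lra)). lra.
Qed.

Lemma continuous_lt_locally (f : R -> R) (x c : R) : continuous f x -> f x < c ->
  exists d, 0 < d /\ forall y, Rabs (y - x) < d -> f y < c.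
Proof.
  intros hf hx. destruct (hf (fun z => z < c) (open_lt c (f x) hx)) as [d hd].
  exists d. split; [apply cond_pos|exact hd].
Qed.

Lemma first_reach (f : R -> R) (a b c : R) :
  (forall x, continuous f x) -> a < b -> f a < c -> c <= f b ->
  exists tau, a < tau <= b /\ c <= f tau /\ forall s, a <= s < tau -> f s < c.
Proof.
  intros hf hab ha hb.
  set (E := fun x => a <= x <= b /\ forall s, a <= s <= x -> f s < c).
  assert (hEa : E a) by (split; [lra|intros s hs; replace s with a by lra; exact ha]).
  destruct (completeness E) as [tau [hub hlub]].
  { exists b. intros x [hx _]. lra. }
  { exists a. exact hEa. }
  assert (hat : a <= tau) by (apply hub, hEa).
  assert (htb : tau <= b) by (apply hlub; intros x [hx _]; lra).
  assert (below : forall s, a <= s < tau -> f s < c).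
  { intros s hs. apply NNPP. intro hns. assert (tau <= s); [|lra].
    apply hlub. intros x [hx hxs]. apply Rnot_lt_le. intro hsx. apply hns, hxs. lra. }
  assert (reach : c <= f tau).
  { apply Rnot_lt_le. intro hlt.
    destruct (continuous_lt_locally f tau c (hf tau) hlt) as [d [hd hnear]].
    assert (htb' : tau < b) by (destruct (Req_dec tau b) as [->|]; lra).
    set (x := Rmin (tau + d / 2) b).
    assert (hx : tau < x <= b /\ x <= tau + d / 2).
    { unfold x. split; [split|]; [apply Rmin_glb_lt; lra|apply Rmin_r|apply Rmin_l]. }
    assert (hEx : E x); [|pose proof (hub x hEx); lra].
    split; [lra|]. intros s hs. destruct (Rlt_le_dec s tau); [apply below; lra|].
    apply hnear. rewrite Rabs_pos_eq; lra. }
  exists tau. repeat split; auto.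
  destruct (Req_dec a tau) as [<-|]; lra.
Qed.

Lemma last_below (f : R -> R) (a b c : R) :
  (forall x, continuous f x) -> a < b -> f a <= c -> c < f b ->
  exists tau, a <= tau < b /\ f tau <= c /\ forall s, tau < s <= b -> c < f s.
Proof.
  intros hf hab ha hb.
  set (g := fun x => - f (a + b - x)).
  assert (hg : forall x, continuous g x).
  { intro x. apply (continuous_opp (fun x => f (a + b - x))).
    apply (continuous_comp (fun x => a + b - x) f); [|apply hf].
    apply (continuous_minus (fun _ => a + b) (fun x => x));
      [apply continuous_const|apply continuous_id]. }
  destruct (first_reach g a b (- c) hg hab) as [t [ht [hreach hbefore]]].
  { unfold g. replace (a + b - a) with b by ring. lra. }
  { unfold g. replace (a + b - b) with a by ring. lra. }
  exists (a + b - t). unfold g in hreach. repeat split; try lra.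
  intros s hs. specialize (hbefore (a + b - s) ltac:(lra)).
  unfold g in hbefore. replace (a + b - (a + b - s)) with s in hbefore by ring. lra.
Qed.

Lemma interval_open_disjoint_uncovered (S1 S2 : R -> Prop) (a b : R) :
  a < b -> S2 a -> S1 b -> open S1 -> open S2 -> (forall x, S1 x -> S2 x -> False) ->
  exists x, ~ S1 x /\ ~ S2 x.
Proof.
  intros hab ha hb o1 o2 disj. apply NNPP. intro hcov.
  assert (hall : forall x, S1 x \/ S2 x).
  { intro x. apply NNPP. intro hn. apply hcov. exists x. tauto. }
  set (E := fun x => a <= x <= b /\ S2 x).
  destruct (completeness E) as [tau [hub hlub]].
  { exists b. intros x [hx _]. lra. }
  { exists a. split; [lra|exact ha]. }
  assert (hat : a <= tau) by (apply hub; split; [lra|exact ha]).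
  assert (htb : tau <= b) by (apply hlub; intros x [hx _]; lra).
  destruct (hall tau) as [h1|h2].
  - destruct (o1 tau h1) as [d hd].
    assert (tau <= tau - d / 2); [|pose proof (cond_pos d); lra].
    apply hlub. intros x [hx hx2]. apply Rnot_lt_le. intro hlt.
    apply (disj x); auto. apply hd. assert (x <= tau) by (apply hub; split; auto).
    change (Rabs (x - tau) < d). apply Rabs_lt_between'. lra.
  - destruct (o2 tau h2) as [d hd]. pose proof (cond_pos d).
    assert (htb' : tau < b) by (destruct (Req_dec tau b) as [->|]; [exfalso; eauto|lra]).
    set (x := Rmin (tau + d / 2) b).
    assert (hx : tau < x <= b /\ x <= tau + d / 2).
    { unfold x. split; [split|]; [apply Rmin_glb_lt; lra|apply Rmin_r|apply Rmin_l]. }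
    assert (hEx : E x); [|pose proof (hub x hEx); lra].
    split; [lra|]. apply hd. change (Rabs (x - tau) < d). apply Rabs_lt_between'. lra.
Qed.

Lemma open_exists_guarded {T} (Q : T -> Prop) (P : T -> R -> Prop) :
  (forall t, Q t -> open (P t)) -> open (fun x => exists t, Q t /\ P t x).
Proof.
  intros hP x [t [ht hx]]. apply (filter_imp (P t)); [|exact (hP t ht x hx)].
  intros y hy. exists t. auto.
Qed.

Lemma closed_forall_guarded {T} (Q : T -> Prop) (P : T -> R -> Prop) :
  (forall t, Q t -> closed (P t)) -> closed (fun x => forall t, Q t -> P t x).
Proof.
  intros hP x hx t ht. apply (hP t ht x). intro hnear. apply hx.
  apply (filter_imp (fun y => ~ P t y)); [|exact hnear]. auto.
Qed.

Lemma continuous_of_lipschitz (g : R -> R) (x K : R) : 0 <= K ->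
  (forall y, Rabs (g y - g x) <= K * Rabs (y - x)) -> continuous g x.
Proof.
  intros hK hlip. apply filterlim_locally. intros [eps heps].
  assert (hd : 0 < eps / (K + 1)) by (apply Rdiv_lt_0_compat; lra).
  exists (mkposreal _ hd). intros y hy.
  change (Rabs (y - x) < eps / (K + 1)) in hy. change (Rabs (g y - g x) < eps).
  pose proof (hlip y). pose proof (mult_lt_of_lt_div K _ eps hK heps (Rabs_pos (y - x)) hy).
  lra.
Qed.

Lemma at_right_interval (a b : R) : a < b -> at_right a (fun s => a < s < b).
Proof.
  intro hab. exists (mkposreal (b - a) ltac:(lra)). intros y hy hay. split; [exact hay|].
  change (Rabs (y - a) < b - a) in hy. apply Rabs_lt_between in hy. lra.
Qed.

Lemma at_right_ex_interval (a : R) (P : R -> Prop) : at_right a P ->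
  exists b, a < b /\ forall u, a < u <= b -> P u.
Proof.
  intros [d hd]. pose proof (cond_pos d). exists (a + d / 2). split; [lra|].
  intros u hu. apply hd; [|lra]. change (Rabs (u - a) < d). apply Rabs_lt_between. lra.
Qed.

Lemma filterlim_Rminus {T} {F : (T -> Prop) -> Prop} {FF : Filter F} (a b : T -> R) (x y : R) :
  filterlim a F (locally x) -> filterlim b F (locally y) ->
  filterlim (fun s => a s - b s) F (locally (x - y)).
Proof.
  intros ha hb. change (x - y) with (plus x (opp y)).
  apply (filterlim_ext (fun s => plus (a s) (opp (b s)))); [reflexivity|].
  eapply filterlim_comp_2; [exact ha| |apply (@filterlim_plus R_AbsRing R_NormedModule)].
  exact (filterlim_comp _ _ _ b opp F _ _ hb (filterlim_opp y)).
Qed.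

Lemma filterlim_Rplus {T} {F : (T -> Prop) -> Prop} {FF : Filter F} (a b : T -> R) (x y : R) :
  filterlim a F (locally x) -> filterlim b F (locally y) ->
  filterlim (fun s => a s + b s) F (locally (x + y)).
Proof.
  intros ha hb. change (x + y) with (plus x y).
  apply (filterlim_ext (fun s => plus (a s) (b s))); [reflexivity|].
  eapply filterlim_comp_2; [exact ha|exact hb|apply (@filterlim_plus R_AbsRing R_NormedModule)].
Qed.

Lemma filterlim_pow2 {T} {F : (T -> Prop) -> Prop} {FF : Filter F} (a : T -> R) (x : R) :
  filterlim a F (locally x) -> filterlim (fun s => a s ^ 2) F (locally (x ^ 2)).
Proof.
  intro ha. replace (x ^ 2) with (mult x x) by (cbn; ring).
  apply (filterlim_ext (fun s => mult (a s) (a s))); [intro s; cbn; ring|].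
  eapply filterlim_comp_2; [exact ha|exact ha|apply (@filterlim_mult R_AbsRing)].
Qed.

(** * The nonlinearity R *)

Lemma Q_spec (v : R) : v < -1 -> Q v < 0 /\ Q v - exp (Q v) = v.
Proof.
  intro hv. unfold Q. apply epsilon_spec.
  destruct (IVT (fun G => G - exp G - v) v 0) as [z [hz hroot]].
  - intro x. apply derivable_continuous_pt. reg.
  - lra.
  - pose proof (exp_pos v). lra.
  - rewrite exp_0. lra.
  - exists z. split; [|lra].
    destruct (Req_dec z 0) as [->|]; [rewrite exp_0 in hroot; lra|lra].
Qed.

Lemma exp_lt_1 (x : R) : x < 0 -> exp x < 1.
Proof. intro h. rewrite <- exp_0. apply exp_increasing, h. Qed.

Lemma sub_exp_lt (x y : R) : x < y -> y <= 0 -> x - exp x < y - exp y.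
Proof.
  intros hxy hy. destruct (is_derive_MVT exp exp x y hxy) as [c [hc e]].
  - intros c _. apply is_derive_Reals, derivable_pt_lim_exp.
  - pose proof (exp_lt_1 c ltac:(lra)). nra.
Qed.

Lemma Q_le (a b : R) : b <= a -> a < -1 -> Q b <= Q a.
Proof.
  intros hba ha. destruct (Q_spec a ha) as [qa ea]. destruct (Q_spec b ltac:(lra)) as [qb eb].
  apply Rnot_lt_le. intro hlt. pose proof (sub_exp_lt (Q a) (Q b) hlt ltac:(lra)). lra.
Qed.

Lemma Rf_lt (v : R) : v < -1 -> Rf v = -2 * (1 - exp (Q v)) ^ 2.
Proof. intro h. unfold Rf. destruct (Rlt_dec v (-1)); [reflexivity|lra]. Qed.

Lemma Rf_ge (v : R) : -1 <= v -> Rf v = 4 * (v + 1).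
Proof. intro h. unfold Rf. destruct (Rlt_dec v (-1)); [lra|reflexivity]. Qed.

(* For [v < -1] and [G = Q v], this is [4 v - Rf v] as a function of [G]. *)
Lemma sub_exp_sq_le (x y : R) : x <= y ->
  4 * (x - exp x) + 2 * (1 - exp x) ^ 2 <= 4 * (y - exp y) + 2 * (1 - exp y) ^ 2.
Proof.
  intro hxy.
  apply (le_of_is_derive_nonneg (fun G => 4 * (G - exp G) + 2 * (1 - exp G) ^ 2)
                                (fun G => 4 * (1 - exp G) ^ 2)); [exact hxy| |].
  - intros c _. auto_derive; [exact I|ring].
  - intros c _. pose proof (pow2_ge_0 (1 - exp c)). lra.
Qed.

Lemma Rf_sub_bounds (a b : R) : b <= a -> 0 <= Rf a - Rf b <= 4 * (a - b).
Proof.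
  intro hba. destruct (Rlt_le_dec a (-1)) as [ha|ha].
  - rewrite (Rf_lt a ha), (Rf_lt b ltac:(lra)).
    destruct (Q_spec a ha) as [qa ea]. destruct (Q_spec b ltac:(lra)) as [qb eb].
    pose proof (Q_le a b hba ha) as hq. pose proof (sub_exp_sq_le _ _ hq).
    assert (exp (Q b) <= exp (Q a))
      by (apply exp_le_mono, hq).
    pose proof (exp_lt_1 (Q a) qa). pose proof (exp_pos (Q b)). split; nra.
  - rewrite (Rf_ge a ha). destruct (Rlt_le_dec b (-1)) as [hb|hb].
    + rewrite (Rf_lt b hb). destruct (Q_spec b hb) as [qb eb].
      pose proof (sub_exp_sq_le (Q b) 0 ltac:(lra)) as hphi. rewrite exp_0 in hphi.
      pose proof (pow2_ge_0 (1 - exp (Q b))). split; nra.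
    + rewrite (Rf_ge b hb). lra.
Qed.

Lemma Rf_lipschitz (a b : R) : Rabs (Rf a - Rf b) <= 4 * Rabs (a - b).
Proof.
  destruct (Rle_lt_dec b a) as [hba|hab].
  - pose proof (Rf_sub_bounds a b hba). rewrite !Rabs_pos_eq; lra.
  - pose proof (Rf_sub_bounds b a ltac:(lra)).
    rewrite (Rabs_left1 (a - b)), Rabs_left1; lra.
Qed.

Lemma Rf_neg (v : R) : v < -1 -> Rf v < 0.
Proof.
  intro hv. rewrite (Rf_lt v hv). destruct (Q_spec v hv) as [hq _].
  pose proof (exp_lt_1 _ hq). nra.
Qed.

Lemma Rf_pos (v : R) : -1 < v -> 0 < Rf v.
Proof. intro hv. rewrite Rf_ge; lra. Qed.

Lemma Rf_ge_m2 (v : R) : -2 <= Rf v.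
Proof.
  destruct (Rlt_le_dec v (-1)) as [hv|hv]; [|rewrite Rf_ge; lra].
  rewrite (Rf_lt v hv). destruct (Q_spec v hv) as [hq _].
  pose proof (exp_lt_1 _ hq). pose proof (exp_pos (Q v)). nra.
Qed.

(** * Solutions for t > 0 *)

Definition solves_ode (f : R -> R) : Prop :=
  (forall t, ex_derive f t) /\
  (forall t, 0 < t -> is_derive (Derive f) t (Rf (f t) - 3 * Derive f t)).

Lemma is_solution_solves_ode (m n : R) (f : R -> R) : is_solution m n f -> solves_ode f.
Proof. intros [hex [hder _]]. split; assumption. Qed.

Lemma solves_ode_const_m1 : solves_ode (fun _ => -1).
Proof.
  split; [intro; apply ex_derive_const|].
  intros t _. rewrite Derive_const, Rf_ge by lra.
  apply (is_derive_ext (fun _ => 0)); [intro; rewrite Derive_const; reflexivity|].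
  auto_derive; [exact I|ring].
Qed.

Section Solution.

Variable f : R -> R.
Hypothesis hf : solves_ode f.

Lemma solution_continuous (t : R) : continuous f t.
Proof. exact (ex_derive_continuous f t (proj1 hf t)). Qed.

Lemma solution_is_derive (t : R) : is_derive f t (Derive f t).
Proof. apply Derive_correct, (proj1 hf). Qed.

Lemma integrating_factor_derive (c t : R) : 0 < t ->
  is_derive (fun s => (Derive f s + c) * exp (3 * s)) t ((Rf (f t) + 3 * c) * exp (3 * t)).
Proof.
  intro ht.
  assert (hshift : is_derive (fun s => Derive f s + c) t (Rf (f t) - 3 * Derive f t + 0))
    by (apply (is_derive_plus (Derive f) (fun _ => c));
        [apply (proj2 hf), ht|apply (@is_derive_const R_AbsRing R_NormedModule)]).
  pose proof (is_derive_mult_exp _ _ 3 t hshift) as hd. cbv beta in hd.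
  replace ((Rf (f t) + 3 * c) * exp (3 * t))
    with ((Rf (f t) - 3 * Derive f t + 0 + 3 * (Derive f t + c)) * exp (3 * t)) by ring.
  exact hd.
Qed.

Lemma integrating_factor_le (c s t : R) : 0 < s <= t ->
  (forall u, s < u < t -> 0 <= Rf (f u) + 3 * c) ->
  (Derive f s + c) * exp (3 * s) <= (Derive f t + c) * exp (3 * t).
Proof.
  intros hst hsign.
  apply (le_of_is_derive_nonneg (fun u => (Derive f u + c) * exp (3 * u))
           (fun u => (Rf (f u) + 3 * c) * exp (3 * u))); [lra| |].
  - intros u hu. apply integrating_factor_derive. lra.
  - intros u hu. pose proof (exp_pos (3 * u)). specialize (hsign u hu). nra.
Qed.

Lemma integrating_factor_ge (c s t : R) : 0 < s <= t ->
  (forall u, s < u < t -> Rf (f u) + 3 * c <= 0) ->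
  (Derive f t + c) * exp (3 * t) <= (Derive f s + c) * exp (3 * s).
Proof.
  intros hst hsign. apply Ropp_le_cancel.
  apply (le_of_is_derive_nonneg (fun u => - ((Derive f u + c) * exp (3 * u)))
           (fun u => - ((Rf (f u) + 3 * c) * exp (3 * u)))); [lra| |].
  - intros u hu. apply (is_derive_opp (fun u => (Derive f u + c) * exp (3 * u))).
    apply integrating_factor_derive. lra.
  - intros u hu. pose proof (exp_pos (3 * u)). specialize (hsign u hu). nra.
Qed.

Lemma escape_above_persists (t1 : R) : 0 < t1 -> -1 < f t1 -> 0 < Derive f t1 ->
  forall t2, t1 <= t2 -> -1 < f t2.
Proof.
  intros ht1 hf1 hd1 t2 ht12. apply Rnot_le_lt. intro hf2.
  assert (hopp : forall x, continuous (fun u => - f u) x)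
    by (intro x; apply (continuous_opp f), solution_continuous).
  destruct (first_reach (fun u => - f u) t1 t2 1 hopp) as [tau [htau [hreach hbefore]]];
    [destruct (Req_dec t1 t2) as [<-|]; lra|lra|lra|].
  cbv beta in hreach, hbefore.
  assert (hrising : forall s, t1 <= s < tau -> 0 < Derive f s).
  { intros s hs.
    assert (hmono : (Derive f t1 + 0) * exp (3 * t1) <= (Derive f s + 0) * exp (3 * s)).
    { apply integrating_factor_le; [lra|]. intros u hu.
      pose proof (Rf_pos (f u) ltac:(specialize (hbefore u ltac:(lra)); lra)). lra. }
    pose proof (exp_pos (3 * s)). pose proof (exp_pos (3 * t1)). nra. }
  destruct (is_derive_MVT f (Derive f) t1 tau) as [c [hc hincr]]; [lra| |].
  { intros c _. apply solution_is_derive. }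
  specialize (hrising c ltac:(lra)). nra.
Qed.

Lemma turn_back_persists (t1 : R) : 0 < t1 -> f t1 < -1 -> Derive f t1 < 0 ->
  forall t2, t1 <= t2 -> f t2 < -1.
Proof.
  intros ht1 hf1 hd1 t2 ht12. apply Rnot_le_lt. intro hf2.
  destruct (first_reach f t1 t2 (-1) solution_continuous) as [tau [htau [hreach hbefore]]];
    [destruct (Req_dec t1 t2) as [<-|]; lra|lra|lra|].
  assert (hfalling : forall s, t1 <= s < tau -> Derive f s < 0).
  { intros s hs.
    assert (hmono : (Derive f s + 0) * exp (3 * s) <= (Derive f t1 + 0) * exp (3 * t1)).
    { apply integrating_factor_ge; [lra|]. intros u hu.
      pose proof (Rf_neg (f u) (hbefore u ltac:(lra))). lra. }
    pose proof (exp_pos (3 * s)). pose proof (exp_pos (3 * t1)). nra. }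
  destruct (is_derive_MVT f (Derive f) t1 tau) as [c [hc hdecr]]; [lra| |].
  { intros c _. apply solution_is_derive. }
  specialize (hfalling c ltac:(lra)). nra.
Qed.

End Solution.

Definition energy (f1 f2 : R -> R) (s : R) : R :=
  (f1 s - f2 s) ^ 2 + (Derive f1 s - Derive f2 s) ^ 2.

Lemma energy_rate_bound (x y r : R) : r ^ 2 <= 16 * x ^ 2 ->
  Rabs (2 * x * y + 2 * y * (r - 3 * y)) <= 20 * (x ^ 2 + y ^ 2).
Proof.
  intro hr. apply Rabs_le.
  pose proof (pow2_ge_0 (x - y)). pose proof (pow2_ge_0 (x + y)).
  pose proof (pow2_ge_0 (y - r)). pose proof (pow2_ge_0 (y + r)). split; nra.
Qed.

Lemma energy_gronwall (f1 f2 : R -> R) (s t : R) : solves_ode f1 -> solves_ode f2 -> 0 < s <= t ->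
  energy f1 f2 t <= energy f1 f2 s * exp (20 * (t - s)) /\
  energy f1 f2 s <= energy f1 f2 t * exp (20 * (t - s)).
Proof.
  intros [hex1 hder1] [hex2 hder2] hst.
  set (x := fun c => f1 c - f2 c). set (y := fun c => Derive f1 c - Derive f2 c).
  set (r := fun c => Rf (f1 c) - Rf (f2 c)).
  apply (gronwall_two_sided _ (fun c => 2 * x c * y c + 2 * y c * (r c - 3 * y c))); [lra| |].
  - intros c hc. unfold energy. auto_derive.
    { repeat split; auto;
        [exists (Rf (f1 c) - 3 * Derive f1 c)|exists (Rf (f2 c) - 3 * Derive f2 c)];
        apply hder1 || apply hder2; lra. }
    change (fun u => Derive f1 u) with (Derive f1). change (fun u => Derive f2 u) with (Derive f2).
    change (fun u => f1 u) with f1. change (fun u => f2 u) with f2.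
    rewrite (is_derive_unique _ _ _ (hder1 c ltac:(lra))),
            (is_derive_unique _ _ _ (hder2 c ltac:(lra))).
    unfold x, y, r. ring.
  - intros c _. apply energy_rate_bound. unfold r, x.
    pose proof (Rf_lipschitz (f1 c) (f2 c)) as hlip.
    rewrite <- (pow2_abs (Rf (f1 c) - Rf (f2 c))), <- (pow2_abs (f1 c - f2 c)).
    pose proof (Rabs_pos (Rf (f1 c) - Rf (f2 c))). nra.
Qed.

(** * Solutions near t = 0 *)

Section InitialValue.

Variables (m n : R) (f : R -> R).
Hypothesis hm : m < -1.
Hypothesis hsol : is_solution m n f.

Let hode : solves_ode f := is_solution_solves_ode m n f hsol.

Lemma solution_at_right_0 : filterlim f (at_right 0) (locally m).
Proof.
  pose proof hsol as [_ [_ [h0 _]]]. rewrite <- h0.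
  apply (filterlim_filter_le_1 f (filter_le_within (F := locally 0) _)), solution_continuous, hode.
Qed.

Lemma solution_below_m1_near_0 : at_right 0 (fun s => f s < -1).
Proof. exact (solution_at_right_0 (fun y => y < -1) (open_lt (-1) m hm)). Qed.

(* The equation is only imposed for t > 0, so continuity of V' at 0 must be derived:
   near 0 we have V < -1, hence (V' e^{3t})' = R(V) e^{3t} and then V'' are bounded. *)
Lemma Derive_bounded_near_0 (b : R) : 0 < b <= 1 -> (forall u, 0 < u <= b -> f u < -1) ->
  exists B, forall s, 0 < s <= b -> Rabs (Derive f s) <= B.
Proof.
  intros hb hbelow.
  set (h := fun s => (Derive f s + 0) * exp (3 * s)).
  exists (Rabs (h b) + 2 * exp 3). intros s hs.
  assert (hh : Rabs (h b - h s) <= 2 * exp 3 * (b - s)).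
  { apply (lipschitz_of_is_derive_bound h (fun u => (Rf (f u) + 3 * 0) * exp (3 * u))); [lra| |].
    - intros c hc. apply integrating_factor_derive; [exact hode|lra].
    - intros c hc. rewrite Rmult_0_r, Rplus_0_r, Rabs_mult, (Rabs_pos_eq (exp _))
        by (left; apply exp_pos).
      assert (exp (3 * c) <= exp 3)
        by (apply exp_le_mono; lra).
      pose proof (Rf_neg _ (hbelow c ltac:(lra))). pose proof (Rf_ge_m2 (f c)).
      rewrite Rabs_left by lra. pose proof (exp_pos (3 * c)). nra. }
  assert (1 <= exp (3 * s)) by (rewrite <- exp_0; apply exp_le_mono; lra).
  assert (hhs : Rabs (h s) <= Rabs (h b) + 2 * exp 3).
  { pose proof (Rabs_triang_inv (h s) (h b)). rewrite <- Rabs_Ropp, Ropp_minus_distr in hh.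
    assert (2 * exp 3 * (b - s) <= 2 * exp 3) by (pose proof (exp_pos 3); nra). lra. }
  replace (h s) with (Derive f s * exp (3 * s)) in hhs by (unfold h; ring).
  rewrite Rabs_mult, (Rabs_pos_eq (exp _)) in hhs by (left; apply exp_pos).
  pose proof (Rabs_pos (Derive f s)). nra.
Qed.

Lemma Derive_lipschitz_near_0 : exists b L, 0 < b /\
  forall s t, 0 < s -> s <= t <= b -> Rabs (Derive f t - Derive f s) <= L * (t - s).
Proof.
  destruct (at_right_ex_interval 0 _ solution_below_m1_near_0) as [d [hd hbelow]].
  set (b := Rmin d 1).
  assert (hb : 0 < b <= 1 /\ b <= d)
    by (unfold b; pose proof (Rmin_l d 1); pose proof (Rmin_r d 1);
        pose proof (Rmin_pos d 1 hd Rlt_0_1); lra).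
  destruct (Derive_bounded_near_0 b ltac:(lra) ltac:(intros u hu; apply hbelow; lra)) as [B hB].
  exists b, (2 + 3 * B). split; [lra|]. intros s t hs hst.
  apply (lipschitz_of_is_derive_bound _ (fun u => Rf (f u) - 3 * Derive f u)); [lra| |].
  - intros c hc. apply (proj2 hode). lra.
  - intros c hc. pose proof (Rf_neg _ (hbelow c ltac:(lra))). pose proof (Rf_ge_m2 (f c)).
    pose proof (hB c ltac:(lra)) as hBc. apply Rabs_le_between in hBc.
    apply Rabs_le_between. lra.
Qed.

Lemma Derive_solution_at_right_0 : filterlim (Derive f) (at_right 0) (locally n).
Proof.
  pose proof hsol as [hex [_ [_ hn]]]. rewrite <- hn.
  destruct Derive_lipschitz_near_0 as [b [L [hb hlip]]].
  exact (Derive_at_right_of_lipschitz f 0 b L hb (fun t _ => hex t) hlip).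
Qed.

Lemma beta0_strict_of_weak : (forall t, 0 < t -> 0 <= Derive f t /\ f t <= -1) ->
  forall t, 0 < t -> 0 < Derive f t /\ f t < -1.
Proof.
  intro hweak.
  assert (hbelow : forall t, 0 < t -> f t < -1).
  { intros t0 ht0. destruct (hweak t0 ht0) as [hD [hlt| heq]]; [exact hlt|exfalso].
    assert (hD0 : Derive f t0 = 0).
    { destruct hD as [hpos| <-]; [exfalso|reflexivity].
      destruct (is_derive_pos_locally f t0 _ (solution_is_derive f hode t0) hpos) as [d [hd hnear]].
      destruct (hnear (d / 2) ltac:(lra)) as [hup _]. destruct (hweak (t0 + d / 2)); lra. }
    destruct (filter_ex _ (filter_and _ _ (at_right_interval 0 t0 ht0) solution_below_m1_near_0))
      as [s [hs hfs]].
    destruct (energy_gronwall f (fun _ => -1) s t0 hode solves_ode_const_m1 ltac:(lra))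
      as [_ hback].
    unfold energy in hback. rewrite !Derive_const, heq, hD0 in hback.
    pose proof (pow2_ge_0 (Derive f s - 0)). nra. }
  intros t ht. split; [|exact (hbelow t ht)].
  destruct (hweak t ht) as [[hpos| hzero] _]; [exact hpos|exfalso].
  assert (hconcave : is_derive (fun s => - Derive f s) t (- (Rf (f t) - 3 * Derive f t)))
    by (apply (is_derive_opp (Derive f)), (proj2 hode), ht).
  pose proof (Rf_neg _ (hbelow t ht)).
  destruct (is_derive_pos_locally _ _ _ hconcave ltac:(rewrite <- hzero; lra)) as [d [hd hnear]].
  destruct (hnear (d / 2) ltac:(lra)) as [hdown _]. destruct (hweak (t + d / 2)); lra.
Qed.

(* Since R >= -2, the function (V' + 2/3) e^{3t} is nondecreasing. *)
Lemma Derive_lower_bound : 0 < n ->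
  forall t, 0 < t -> n <= (Derive f t + 2 / 3) * exp (3 * t) - 2 / 3.
Proof.
  intros hn t ht.
  change (Rbar_le n ((Derive f t + 2 / 3) * exp (3 * t) - 2 / 3)).
  apply (filterlim_le (F := at_right 0) (Derive f)
           (fun _ => (Derive f t + 2 / 3) * exp (3 * t) - 2 / 3));
    [|exact Derive_solution_at_right_0|apply filterlim_const].
  assert (hev : at_right 0 (fun s => -2 / 3 < Derive f s))
    by exact (Derive_solution_at_right_0 _ (open_gt (-2 / 3) n ltac:(lra))).
  apply (filter_imp (fun s => (0 < s < t) /\ -2 / 3 < Derive f s));
    [|exact (filter_and _ _ (at_right_interval 0 t ht) hev)].
  intros s [hs hds].
  assert (hmono : (Derive f s + 2 / 3) * exp (3 * s) <= (Derive f t + 2 / 3) * exp (3 * t)).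
  { apply integrating_factor_le; [exact hode|lra|]. intros u _. pose proof (Rf_ge_m2 (f u)). lra. }
  assert (1 <= exp (3 * s)) by (rewrite <- exp_0; apply exp_le_mono; lra).
  nra.
Qed.

End InitialValue.

(** * Dependence on the initial speed *)

Lemma energy_le_initial (m n1 n2 : R) (f1 f2 : R -> R) : m < -1 ->
  is_solution m n1 f1 -> is_solution m n2 f2 ->
  forall t, 0 < t -> energy f1 f2 t <= (n1 - n2) ^ 2 * exp (20 * t).
Proof.
  intros hm hs1 hs2 t ht.
  pose proof (is_solution_solves_ode _ _ _ hs1) as ho1.
  pose proof (is_solution_solves_ode _ _ _ hs2) as ho2.
  assert (hlim : filterlim (energy f1 f2) (at_right 0) (locally ((m - m) ^ 2 + (n1 - n2) ^ 2))).
  { apply filterlim_Rplus; apply filterlim_pow2; apply filterlim_Rminus.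
    - exact (solution_at_right_0 m n1 f1 hs1).
    - exact (solution_at_right_0 m n2 f2 hs2).
    - exact (Derive_solution_at_right_0 m n1 f1 hm hs1).
    - exact (Derive_solution_at_right_0 m n2 f2 hm hs2). }
  replace ((m - m) ^ 2 + (n1 - n2) ^ 2) with ((n1 - n2) ^ 2) in hlim by ring.
  assert (hdecay : energy f1 f2 t * exp (- 20 * t) <= (n1 - n2) ^ 2).
  { change (Rbar_le (energy f1 f2 t * exp (- 20 * t)) ((n1 - n2) ^ 2)).
    apply (filterlim_le (F := at_right 0)
             (fun _ => energy f1 f2 t * exp (- 20 * t)) (energy f1 f2));
      [|apply filterlim_const|exact hlim].
    apply (filter_imp (fun s => 0 < s < t)); [|exact (at_right_interval 0 t ht)].
    intros s hs. destruct (energy_gronwall f1 f2 s t ho1 ho2 ltac:(lra)) as [hfwd _].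
    assert (hexp : exp (20 * (t - s)) * exp (- 20 * t) = exp (- 20 * s))
      by (rewrite <- exp_plus; f_equal; ring).
    assert (exp (- 20 * s) <= 1) by (rewrite <- exp_0; apply exp_le_mono; lra).
    assert (0 <= energy f1 f2 s)
      by (unfold energy; pose proof (pow2_ge_0 (f1 s - f2 s));
          pose proof (pow2_ge_0 (Derive f1 s - Derive f2 s)); lra).
    pose proof (exp_pos (- 20 * t)).
    apply (Rmult_le_compat_r (exp (- 20 * t))) in hfwd; [|lra].
    rewrite Rmult_assoc, hexp in hfwd. nra. }
  assert (hinv : exp (- 20 * t) * exp (20 * t) = 1)
    by (rewrite <- exp_plus, <- exp_0; f_equal; ring).
  pose proof (exp_pos (20 * t)).
  apply (Rmult_le_compat_r (exp (20 * t))) in hdecay; [|lra].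
  rewrite Rmult_assoc, hinv, Rmult_1_r in hdecay. exact hdecay.
Qed.

Lemma solution_lipschitz_in_n (m n1 n2 : R) (f1 f2 : R -> R) : m < -1 ->
  is_solution m n1 f1 -> is_solution m n2 f2 -> forall t, 0 < t ->
  Rabs (f1 t - f2 t) <= exp (10 * t) * Rabs (n1 - n2) /\
  Rabs (Derive f1 t - Derive f2 t) <= exp (10 * t) * Rabs (n1 - n2).
Proof.
  intros hm hs1 hs2 t ht. pose proof (energy_le_initial m n1 n2 f1 f2 hm hs1 hs2 t ht) as hE.
  assert (hsq : (n1 - n2) ^ 2 * exp (20 * t) = (exp (10 * t) * Rabs (n1 - n2)) ^ 2)
    by (rewrite <- pow2_abs; replace (20 * t) with (10 * t + 10 * t) by ring;
        rewrite exp_plus; ring).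
  rewrite hsq in hE. unfold energy in hE.
  assert (hK : 0 <= exp (10 * t) * Rabs (n1 - n2))
    by (apply Rmult_le_pos; [left; apply exp_pos|apply Rabs_pos]).
  pose proof (pow2_ge_0 (f1 t - f2 t)). pose proof (pow2_ge_0 (Derive f1 t - Derive f2 t)).
  split; apply Rabs_le_of_sq_le; lra.
Qed.

Definition escapes_above (V : R -> R -> R) (n : R) : Prop :=
  exists t, 0 < t /\ -1 < V n t /\ 0 < Derive (V n) t.

Definition turns_back (V : R -> R -> R) (n : R) : Prop :=
  exists t, 0 < t /\ V n t < -1 /\ Derive (V n) t < 0.

Section Shooting.

Variables (m : R) (V : R -> R -> R).
Hypothesis hm : m < -1.
Hypothesis hV : forall n, is_solution m n (V n).

Lemma solution_continuous_in_n (t n : R) : 0 < t ->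
  continuous (fun k => V k t) n /\ continuous (fun k => Derive (V k) t) n.
Proof.
  intro ht. pose proof (exp_pos (10 * t)).
  split; apply (continuous_of_lipschitz _ _ (exp (10 * t))); try lra; intro k;
    apply (solution_lipschitz_in_n m k n); auto.
Qed.

Lemma escapes_above_open : open (escapes_above V).
Proof.
  apply open_exists_guarded. intros t ht.
  apply open_and; [apply (open_comp (fun k => V k t) (fun u => -1 < u))
                  |apply (open_comp (fun k => Derive (V k) t) (fun u => 0 < u))];
    (intros n _; apply solution_continuous_in_n, ht) || apply open_gt.
Qed.

Lemma turns_back_open : open (turns_back V).
Proof.
  apply open_exists_guarded. intros t ht.
  apply open_and; [apply (open_comp (fun k => V k t) (fun u => u < -1))
                  |apply (open_comp (fun k => Derive (V k) t) (fun u => u < 0))];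
    (intros n _; apply solution_continuous_in_n, ht) || apply open_lt.
Qed.

Lemma escapes_above_turns_back_disjoint (n : R) : escapes_above V n -> turns_back V n -> False.
Proof.
  intros [t1 [ht1 [hv1 hd1]]] [t2 [ht2 [hv2 hd2]]].
  pose proof (is_solution_solves_ode _ _ _ (hV n)) as ho.
  destruct (Rle_lt_dec t1 t2) as [h12|h21].
  - pose proof (escape_above_persists _ ho t1 ht1 hv1 hd1 t2 h12). lra.
  - pose proof (turn_back_persists _ ho t2 ht2 hv2 hd2 t1 ltac:(lra)). lra.
Qed.

Lemma turns_back_m1 : turns_back V (-1).
Proof.
  assert (hneg : at_right 0 (fun s => Derive (V (-1)) s < 0))
    by exact (Derive_solution_at_right_0 m (-1) (V (-1)) hm (hV (-1)) _
                (open_lt 0 (-1) ltac:(lra))).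
  destruct (filter_ex _ (filter_and _ _ (filter_and _ _ (at_right_interval 0 1 Rlt_0_1)
      (solution_below_m1_near_0 m (-1) (V (-1)) hm (hV (-1)))) hneg)) as [s [[hs hv] hd]].
  exists s. repeat split; tauto.
Qed.

(* For this n, Derive_lower_bound gives V' > 2 - m on (0, 1], so V(1) > 2. *)
Lemma escapes_above_large : escapes_above V ((3 - m) * exp 3).
Proof.
  set (n := (3 - m) * exp 3). pose proof (exp_pos 3).
  assert (hn : 0 < n) by (unfold n; nra).
  assert (hsteep : forall t, 0 < t <= 1 -> 2 - m < Derive (V n) t).
  { intros t ht. pose proof (Derive_lower_bound m n (V n) hm (hV n) hn t ltac:(lra)).
    assert (exp (3 * t) <= exp 3)
      by (apply exp_le_mono; lra).
    pose proof (exp_pos (3 * t)).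
    apply Rnot_le_lt. intro hle.
    assert ((Derive (V n) t + 2 / 3) * exp (3 * t) <= (3 - m) * exp (3 * t))
      by (apply Rmult_le_compat_r; lra).
    assert ((3 - m) * exp (3 * t) <= n) by (unfold n; apply Rmult_le_compat_l; lra).
    lra. }
  pose proof (hV n) as [_ [_ [h0 _]]].
  destruct (is_derive_MVT (V n) (Derive (V n)) 0 1) as [c [hc hrise]]; [lra| |].
  { intros c _. apply solution_is_derive, (is_solution_solves_ode m n), hV. }
  exists 1. pose proof (hsteep c ltac:(lra)). pose proof (hsteep 1 ltac:(lra)).
  repeat split; lra.
Qed.

Lemma weak_beta0_of_neither (n : R) : ~ escapes_above V n -> ~ turns_back V n ->
  forall t, 0 < t -> 0 <= Derive (V n) t /\ V n t <= -1.
Proof.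
  intros hesc hturn. pose proof (is_solution_solves_ode _ _ _ (hV n)) as ho.
  pose proof (hV n) as [_ [_ [h0 _]]].
  assert (hbelow : forall t, 0 < t -> V n t <= -1).
  { intros t1 ht1. apply Rnot_lt_le. intro habove.
    destruct (last_below (V n) 0 t1 (-1) (solution_continuous _ ho) ht1 ltac:(lra) habove)
      as [tau [htau [hle hafter]]].
    destruct (is_derive_MVT (V n) (Derive (V n)) tau t1) as [c [hc hrise]]; [lra| |].
    { intros c _. apply solution_is_derive, ho. }
    apply hesc. exists c. repeat split; [lra|apply hafter; lra|].
    pose proof (hafter t1 ltac:(lra)). nra. }
  intros t ht. split; [|exact (hbelow t ht)].
  apply Rnot_lt_le. intro hneg. destruct (hbelow t ht) as [hlt| heq].
  - apply hturn. exists t. auto.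
  - assert (hdesc : is_derive (fun s => - V n s) t (- Derive (V n) t))
      by (apply (is_derive_opp (V n)), solution_is_derive, ho).
    destruct (is_derive_pos_locally _ _ _ hdesc ltac:(lra)) as [d [hd hnear]].
    set (h := Rmin d t / 2).
    assert (hh : 0 < h < d /\ h < t)
      by (unfold h; pose proof (Rmin_l d t); pose proof (Rmin_r d t);
          pose proof (Rmin_pos d t hd ht); lra).
    destruct (hnear h ltac:(lra)) as [_ hup]. pose proof (hbelow (t - h) ltac:(lra)). lra.
Qed.

Lemma beta0_iff_weak (n : R) :
  beta0 V n <-> forall t, 0 < t -> 0 <= Derive (V n) t /\ V n t <= -1.
Proof.
  split.
  - intros hb t ht. destruct (hb t ht). split; lra.
  - intros hweak t ht. destruct (beta0_strict_of_weak m n (V n) hm (hV n) hweak t ht). split; lra.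
Qed.

Lemma beta0_nonempty : exists n, beta0 V n.
Proof.
  destruct (interval_open_disjoint_uncovered (escapes_above V) (turns_back V)
             (-1) ((3 - m) * exp 3)) as [n [hesc hturn]].
  - pose proof (exp_pos 3). nra.
  - exact turns_back_m1.
  - exact escapes_above_large.
  - exact escapes_above_open.
  - exact turns_back_open.
  - exact escapes_above_turns_back_disjoint.
  - exists n. apply beta0_iff_weak, weak_beta0_of_neither; assumption.
Qed.

Lemma beta0_closed : closed (beta0 V).
Proof.
  apply (closed_ext _ _ (fun n => iff_sym (beta0_iff_weak n))).
  apply closed_forall_guarded. intros t ht.
  apply closed_and; [apply (closed_comp (fun k => Derive (V k) t) (fun u => 0 <= u))
                    |apply (closed_comp (fun k => V k t) (fun u => u <= -1))];
    (intros n; apply solution_continuous_in_n, ht) || apply closed_ge || apply closed_le.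
Qed.

End Shooting.

Theorem lemma4p3 (m : R) (hm : m < -1) (V : R -> R -> R)
  (hV : forall n : R, is_solution m n (V n)) :
  (exists n, beta0 V n) /\ closed (beta0 V) /\
  (forall n, beta0 V n -> forall t, 0 < t -> V n t < -1).
Proof.
  split; [exact (beta0_nonempty m V hm hV)|split; [exact (beta0_closed m V hm hV)|]].
  intros n hb t ht. pose proof (proj1 (beta0_iff_weak m V hm hV n) hb) as hweak.
  exact (proj2 (beta0_strict_of_weak m n (V n) hm (hV n) hweak t ht)).
Qed.
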